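(* Let $n\ge1$ and let $X$ be a vector field on $(\mathbf{R}^3)^n$ such that each component $X_j$, $j=1,\ldots,n$, is a (real) linear combination of cross products $p_i\times p_k$ of the variables $p_1,\ldots,p_n\in\mathbf{R}^3$. Let $Y=\nabla f^X$. Then $\nabla f^Y=3Y$.
   Context: For a vector field $Z$ on $(\mathbf{R}^3)^n$ with components $Z_1,\ldots,Z_n$, $f^Z$ denotes the real-valued function $f^Z(p)=Z_p\cdot p=\sum_{i=1}^n Z_i(p)\cdot p_i$ for $p=(p_1,\ldots,p_n)$; $\nabla$ is the Euclidean gradient on $(\mathbf{R}^3)^n=\mathbf{R}^{3n}$. *)

From HB Require Import structures.
From mathcomp Require Import all_boot all_order all_algebra.
From mathcomp Require Import all_classical all_reals all_analysis.
Set Implicit Arguments. Unset Strict Implicit. Unset Printing Implicit Defensive.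
Import Order.TTheory GRing.Theory Num.Theory.
Import numFieldNormedType.Exports.
Local Open Scope ring_scope.

(* A point p = (p_1,...,p_n) of (R^3)^n is an n x 3 matrix; p_i = row i p. *)
Definition config (R : realType) (n : nat) := 'M[R]_(n, 3).

Definition cmp (R : realType) (u : 'rV[R]_3) (k : nat) : R := u 0 (inord k).

Definition cross (R : realType) (u v : 'rV[R]_3) : 'rV[R]_3 :=
  \row_(a < 3)
    match val a with
    | 0 => cmp u 1 * cmp v 2 - cmp u 2 * cmp v 1
    | 1 => cmp u 2 * cmp v 0 - cmp u 0 * cmp v 2
    | _ => cmp u 0 * cmp v 1 - cmp u 1 * cmp v 0
    end.

Definition dot3 (R : realType) (u v : 'rV[R]_3) : R := \sum_(a < 3) u 0 a * v 0 a.

Definition fvf (R : realType) (n : nat) (Z : 'M[R]_(n, 3) -> 'M[R]_(n, 3))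
  (p : 'M[R]_(n, 3)) : R := \sum_(i < n) dot3 (row i (Z p)) (row i p).

Definition grad (R : realType) (n : nat) (f : 'M[R]_(n, 3) -> R)
  (p : 'M[R]_(n, 3)) : 'M[R]_(n, 3) :=
  \matrix_(i < n, a < 3) ('D_(delta_mx i a) f p).

From HB Require Import structures.
From mathcomp Require Import all_boot all_order all_algebra.
From mathcomp Require Import all_classical all_reals all_analysis.
From mathcomp Require Import ring.
Import Order.TTheory GRing.Theory Num.Theory.
Import numFieldNormedType.Exports.
Local Open Scope ring_scope.
Local Open Scope classical_set_scope.

(* f^X(p) is the diagonal B(p,p,p) of the trilinear form
   B(p,q,r) = sum_j sum_{i,k} c_jik (p_i x q_k) . r_j, so it is a cubic polynomial
   whose directional derivative at p along v is the polarization
   B(v,p,p) + B(p,v,p) + B(p,p,v), linear in v.  Hence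
   f^Y(p) = sum_{i,a} (d f^X / d p_ia)(p) p_ia is that derivative along v = p,
   which is 3 B(p,p,p) = 3 f^X(p) (Euler's identity); so f^Y = 3 f^X and
   grad f^Y = 3 grad f^X = 3 Y. *)

Section ScalarMaps.
Context {R : pzRingType} {V : lmodType R}.

Lemma scalar_sum_fun (I : Type) (s : seq I) (F : I -> V -> R) :
  (forall t, scalar (F t)) -> scalar (fun x => \sum_(t <- s) F t x).
Proof.
move=> F_scalar a x y; rewrite mulr_sumr -big_split.
by apply: eq_bigr => t _; rewrite F_scalar.
Qed.

Context {L : V -> R} (L_scalar : scalar L).

Let L_lin : {scalar V} := HB.pack L (GRing.isLinear.Build R V R *%R L L_scalar).

Lemma scalar_sum (I : Type) (s : seq I) (P : pred I) (u : I -> V) :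
  L (\sum_(t <- s | P t) u t) = \sum_(t <- s | P t) L (u t).
Proof. exact: (raddf_sum L_lin). Qed.

Lemma scalar_scale a x : L (a *: x) = a * L x.
Proof. exact: (GRing.scalarZ L_lin). Qed.

End ScalarMaps.

Section CubicExpansion.
Context {R : numFieldType} {V : normedModType R}.

Lemma is_derive_cubic_expansion (F : V -> R) p v (a1 a2 a3 : R) :
  (forall h : R, F (h *: v + p) = F p + h * a1 + h ^+ 2 * a2 + h ^+ 3 * a3) ->
  is_derive p v F a1.
Proof.
move=> F_exp; pose g h : R := a1 + h * a2 + h ^+ 2 * a3.
have g_cvg : g @ 0^' --> a1.
  apply: cvg_trans (cvg_fmap2 (@nbhs_dnbhs _ (0 : R))) _.
  have -> : a1 = g 0 by rewrite /g !mul0r expr0n /= mul0r !addr0.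
  apply: cvgD; first apply: cvgD; first exact: cvg_cst.
    by apply: cvgMr_tmp; exact: cvg_id.
  by apply: cvgMr_tmp; rewrite expr2; apply: cvgM; exact: cvg_id.
have quot_cvg : (fun h : R => h^-1 *: ((F \o shift p) (h *: v) - F p)) @ 0^' --> a1.
  apply: cvg_trans g_cvg; apply: near_eq_cvg; near=> h.
  have h_neq0 : h != 0 by near: h; exact: nbhs_dnbhs_neq.
  by rewrite /= /shift /= F_exp /g /GRing.scale /=; field.
by split; [apply/cvg_ex; exists a1 | exact: cvg_lim].
Unshelve. all: end_near.
Qed.

End CubicExpansion.

Section TrilinearForm.
Context {R : numFieldType} {V : normedModType R}.
Variable B : V -> V -> V -> R.
Hypotheses (B_scalar1 : forall q r, scalar (fun p => B p q r))
  (B_scalar2 : forall p r, scalar (fun q => B p q r))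
  (B_scalar3 : forall p q, scalar (B p q)).

Definition polar p v := B v p p + B p v p + B p p v.

Lemma polar_is_scalar p : scalar (polar p).
Proof. by move=> a x y; rewrite /polar B_scalar1 B_scalar2 B_scalar3; ring. Qed.

Lemma polar_diag p : polar p p = 3 * B p p p.
Proof. by rewrite /polar; ring. Qed.

Lemma is_derive_cubic p v : is_derive p v (fun x => B x x x) (polar p v).
Proof.
apply: (is_derive_cubic_expansion _ _ _ _ (B v v p + B v p v + B p v v) (B v v v)).
by move=> h /=; rewrite /polar !(B_scalar1, B_scalar2, B_scalar3); ring.
Qed.

End TrilinearForm.

Section Configurations.
Context {R : realType}.
Implicit Types u v w : 'rV[R]_3.

Lemma cross_linearl w : linear (fun u => cross u w).
Proof.
move=> a u v; apply/rowP => b; rewrite !mxE /cmp !mxE.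
by case: (val b) => [|[|?]]; ring.
Qed.

Lemma cross_linearr u : linear (cross u).
Proof.
move=> a v w; apply/rowP => b; rewrite !mxE /cmp !mxE.
by case: (val b) => [|[|?]]; ring.
Qed.

Lemma dot3_scalarl w : scalar (fun u => dot3 u w).
Proof.
move=> a u v; rewrite /dot3 mulr_sumr -big_split.
by apply: eq_bigr => b _; rewrite !mxE mulrDl mulrA.
Qed.

Lemma dot3_scalarr u : scalar (dot3 u).
Proof.
move=> a v w; rewrite /dot3 mulr_sumr -big_split.
by apply: eq_bigr => b _; rewrite !mxE mulrDr mulrCA.
Qed.

Context {n : nat}.
Implicit Types p q r : 'M[R]_(n, 3).

Definition cross_form (c : 'I_n -> 'I_n -> 'I_n -> R) p q r : R :=
  \sum_(j < n) \sum_(i < n) \sum_(k < n)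
    c j i k * dot3 (cross (row i p) (row k q)) (row j r).

Variable c : 'I_n -> 'I_n -> 'I_n -> R.

Lemma cross_form_scalar1 q r : scalar (fun p => cross_form c p q r).
Proof.
do 3![apply: scalar_sum_fun => ?]; move=> a x y.
by rewrite linearP cross_linearl dot3_scalarl; ring.
Qed.

Lemma cross_form_scalar2 p r : scalar (fun q => cross_form c p q r).
Proof.
do 3![apply: scalar_sum_fun => ?]; move=> a x y.
by rewrite linearP cross_linearr dot3_scalarl; ring.
Qed.

Lemma cross_form_scalar3 p q : scalar (cross_form c p q).
Proof.
do 3![apply: scalar_sum_fun => ?]; move=> a x y.
by rewrite linearP dot3_scalarr; ring.
Qed.

Lemma fvf_cross_combination (X : 'M[R]_(n, 3) -> 'M[R]_(n, 3)) :
  (forall p j, row j (X p) = \sum_(i < n) \sum_(k < n) c j i k *: cross (row i p) (row k p)) ->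
  fvf X = fun p => cross_form c p p p.
Proof.
move=> X_cross; apply: funext => p; apply: eq_bigr => j _.
rewrite X_cross (scalar_sum (dot3_scalarl _)).
apply: eq_bigr => i _; rewrite (scalar_sum (dot3_scalarl _)).
by apply: eq_bigr => k _; rewrite (scalar_scale (dot3_scalarl _)).
Qed.

Lemma fvf_grad {F L : 'M[R]_(n, 3) -> R} q :
  scalar L -> (forall i a, is_derive q (delta_mx i a) F (L (delta_mx i a))) ->
  fvf (grad F) q = L q.
Proof.
move=> L_scalar dF; rewrite [in RHS](matrix_sum_delta q) (scalar_sum L_scalar).
apply: eq_bigr => i _; rewrite (scalar_sum L_scalar) /dot3.
by apply: eq_bigr => a _; rewrite (scalar_scale L_scalar) !mxE derive_val mulrC.
Qed.

Lemma grad_scale (F : 'M[R]_(n, 3) -> R) (k : R) q :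
  (forall i a, derivable F q (delta_mx i a)) -> grad (k \*: F) q = k *: grad F q.
Proof. by move=> dF; apply/matrixP => i a; rewrite !mxE deriveZ. Qed.

End Configurations.

Theorem proposition4p4 (R : realType) (n : nat) (hn : (0 < n)%N)
  (X : 'M[R]_(n, 3) -> 'M[R]_(n, 3))
  (hX : exists c : 'I_n -> 'I_n -> 'I_n -> R,
      forall (p : 'M[R]_(n, 3)) (j : 'I_n),
        row j (X p) = \sum_(i < n) \sum_(k < n) c j i k *: cross (row i p) (row k p)) :
  let Y := grad (fvf X) in
  forall p : 'M[R]_(n, 3), grad (fvf Y) p = 3 *: Y p.
Proof.
move=> Y p; case: hX => c /fvf_cross_combination fX_cubic.
pose B := cross_form c.
have polar_B_scalar := polar_is_scalar B (cross_form_scalar1 c) (cross_form_scalar2 c)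
  (cross_form_scalar3 c).
have dfX q v : is_derive q v (fvf X) (polar B q v).
  rewrite fX_cubic; exact: (is_derive_cubic B (cross_form_scalar1 c)
    (cross_form_scalar2 c) (cross_form_scalar3 c)).
have fY_eq : fvf Y = 3 \*: fvf X.
  apply: funext => q.
  by rewrite /Y (fvf_grad q (polar_B_scalar q) (fun i a => dfX q _)) polar_diag fX_cubic.
by rewrite fY_eq grad_scale.
Qed.
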